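(* Let $k\geq 2$ be an integer and let $A=[\bm{a}_1,\dots,\bm{a}_n]\in\mathbb{R}^{m\times n}$ have columns with $\|\bm{a}_i\|_2=1$ for all $i$. Suppose the mutual coherence $\mu=\max_{1\leq i<j\leq n}|\langle \bm{a}_i,\bm{a}_j\rangle|$ satisfies $$\mu<\frac{1}{2k-1}.$$ Let $\bm{x}\in\mathbb{R}^n$ be arbitrary (not necessarily sparse), let $\epsilon\geq 0$, let $\bm{z}\in\mathbb{R}^m$ with $\|\bm{z}\|_2\leq\epsilon$, and set $\bm{b}=A\bm{x}+\bm{z}$. Let $\lambda>0$ and let $\bm{x}^{\sharp}$ be an optimal solution of $$\min_{\bm{y}\in\mathbb{R}^n}\ \|\bm{y}\|_1+\frac{1}{2\lambda}\|\bm{b}-A\bm{y}\|_2^2 .$$ Define $$\alpha_1=\frac{\sqrt{1+(k-1)\mu}}{1-(k-1)\mu},\qquad \alpha_2=\frac{\sqrt{k}\,\mu}{1-(k-1)\mu},$$ $$f_k(t)=kt^2+3\sqrt{k}\,t+3,\qquad g_k(t)=2kt^2+4\sqrt{k}\,t+1 .$$ Then $$\|A(\bm{x}^{\sharp}-\bm{x})\|_2\leq \frac{2\lambda}{\sqrt{k}\alpha_1\lambda+\epsilon}\,\|\bm{x}-\bm{x}_{[k]}\|_1+2(\sqrt{k}\alpha_1\lambda+\epsilon),$$ and $$\|\bm{x}^{\sharp}-\bm{x}\|_2\leq \frac{2\sqrt{k}\alpha_1 f_k(\alpha_2)\lambda+2g_k(\alpha_2)\epsilon}{\sqrt{k}(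1-\sqrt{k}\alpha_2)(\sqrt{k}\alpha_1\lambda+\epsilon)}\,\|\bm{x}-\bm{x}_{[k]}\|_1+\frac{\big(\sqrt{k}\alpha_1(5+2\sqrt{k}\alpha_2)\lambda+g_k(\alpha_2)\epsilon\big)(\sqrt{k}\alpha_1\lambda+\epsilon)}{\sqrt{k}(1-\sqrt{k}\alpha_2)\lambda}.$$
   Context: For $\bm{x}\in\mathbb{R}^n$, $\bm{x}_{[k]}$ denotes a best $k$-term approximation of $\bm{x}$, i.e. $\bm{x}_{[k]}\in\arg\min_{\|\bm{y}\|_0\leq k}\|\bm{y}-\bm{x}\|_2$, where $\|\bm{y}\|_0$ is the number of nonzero entries of $\bm{y}$. *)

From HB Require Import structures.
From mathcomp Require Import all_boot all_order all_algebra.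
From mathcomp Require Import reals.
Set Implicit Arguments. Unset Strict Implicit. Unset Printing Implicit Defensive.
Import Order.TTheory GRing.Theory Num.Theory.
Local Open Scope ring_scope.

Section Defs.
Variable R : realType.

Definition dotv (p : nat) (u v : 'cV[R]_p) : R := \sum_(l < p) u l 0 * v l 0.
Definition norm2 (p : nat) (u : 'cV[R]_p) : R := Num.sqrt (\sum_(l < p) u l 0 ^+ 2).
Definition norm1 (p : nat) (u : 'cV[R]_p) : R := \sum_(l < p) `|u l 0|.
Definition norm0 (p : nat) (u : 'cV[R]_p) : nat := #|[set l : 'I_p | u l 0 != 0]|.

Definition best_kterm (p k : nat) (x xk : 'cV[R]_p) : Prop :=
  (norm0 xk <= k)%N /\
  forall y : 'cV[R]_p, (norm0 y <= k)%N -> norm2 (xk - x) <= norm2 (y - x).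

(* mutual coherence: max_{i<j} |<a_i,a_j>| (0 if there is no such pair) *)
Definition coherence (m n : nat) (A : 'M[R]_(m, n)) : R :=
  \big[Num.max/0]_(i < n) \big[Num.max/0]_(j < n | (i < j)%N)
     `|dotv (col i A) (col j A)|.

Definition lasso_obj (m n : nat) (A : 'M[R]_(m, n)) (b : 'cV[R]_m) (lam : R)
    (y : 'cV[R]_n) : R :=
  norm1 y + (2 * lam)^-1 * norm2 (b - A *m y) ^+ 2.

Definition alpha1 (k : nat) (mu : R) : R :=
  Num.sqrt (1 + (k%:R - 1) * mu) / (1 - (k%:R - 1) * mu).
Definition alpha2 (k : nat) (mu : R) : R :=
  Num.sqrt k%:R * mu / (1 - (k%:R - 1) * mu).
Definition fk (k : nat) (t : R) : R := k%:R * t ^+ 2 + 3 * Num.sqrt k%:R * t + 3.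
Definition gk (k : nat) (t : R) : R := 2 * k%:R * t ^+ 2 + 4 * Num.sqrt k%:R * t + 1.

End Defs.

From HB Require Import structures.
From mathcomp Require Import all_boot all_order all_algebra.
From mathcomp Require Import reals.
From mathcomp Require Import ring lra.
Set Implicit Arguments. Unset Strict Implicit. Unset Printing Implicit Defensive.
Import Order.TTheory GRing.Theory Num.Theory.
Local Open Scope ring_scope.

(* With h = xs - x and T the support of xk, optimality of xs against x gives
   |Ah|^2 <= 2 eps |Ah| + 2 lam (|h_T|_1 - |h_{~T}|_1 + 2 |x_{~T}|_1).
   Unit columns and coherence mu < 1/(2k-1) make the Gram matrix of any k columns
   a perturbation of the identity, so for |S| <= k,
   |h_S|_2 <= alpha1 |Ah| + alpha2 |h_{~S}|_1.
   With S = T this turns the optimality inequality into a quadratic inequality in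
   |Ah| which bounds both |Ah| and |h_{~T}|_1.  Finally |h|_2 is split over T, the
   k largest entries of h off T, and the rest, whose l2 norm is at most
   |h_{~T}|_1 / sqrt k. *)

Section Sums.
Variable R : realFieldType.

Lemma sum_setC_split (I : finType) (T : {set I}) (F : I -> R) :
  \sum_i F i = \sum_(i in T) F i + \sum_(i in ~: T) F i.
Proof. by rewrite (bigID [in T]) /=; congr (_ + _); apply: eq_bigl => i; rewrite in_setC. Qed.

Lemma sum_sum_diag (I : finType) (S : pred I) (F : I -> I -> R) :
  \sum_(i | S i) \sum_(j | S j) F i j =
  \sum_(i | S i) F i i + \sum_(i | S i) \sum_(j | S j && (j != i)) F i j.
Proof. by rewrite -big_split; apply: eq_bigr => i Si; rewrite (bigD1 i Si). Qed.

Lemma sum_mul_sqr_le (I : finType) (P : pred I) (a b : I -> R) :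
  (\sum_(i | P i) a i * b i) ^+ 2 <=
  (\sum_(i | P i) a i ^+ 2) * (\sum_(i | P i) b i ^+ 2).
Proof.
set A := \sum_(i | P i) a i ^+ 2; set B := \sum_(i | P i) b i ^+ 2.
set C := \sum_(i | P i) a i * b i.
have B_ge0 : 0 <= B by apply: sumr_ge0 => i _; apply: sqr_ge0.
have [B0 | B_neq0] := eqVneq B 0.
  have b0 i : P i -> b i = 0.
    move=> Pi; apply/eqP; rewrite -sqrf_eq0; apply/eqP/(psumr_eq0P _ B0) => // j _.
    exact: sqr_ge0.
  by rewrite /C big1 ?expr0n ?B0 ?mulr0 // => i /b0 ->; rewrite mulr0.
have : 0 <= \sum_(i | P i) (B * a i - C * b i) ^+ 2 by apply: sumr_ge0 => i _; apply: sqr_ge0.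
have -> : \sum_(i | P i) (B * a i - C * b i) ^+ 2 = B * (A * B - C ^+ 2).
  transitivity (\sum_(i | P i) (B ^+ 2 * a i ^+ 2 - (2 * B * C) * (a i * b i) + C ^+ 2 * b i ^+ 2)).
    by apply: eq_bigr => i _; ring.
  rewrite big_split /= sumrB -!mulr_sumr -/A -/B -/C; ring.
by rewrite pmulr_rge0 ?subr_ge0 // lt_def B_neq0.
Qed.

Lemma exists_topk (I : finType) (k : nat) (D : {set I}) (h : I -> R) :
  exists S : {set I}, [/\ S \subset D, (#|S| <= k)%N &
    forall j, j \in D :\: S -> k%:R * `|h j| <= \sum_(i in S) `|h i|].
Proof.
pose admissible (S : {set I}) := (S \subset D) && (#|S| <= k)%N.
pose mass (S : {set I}) := \sum_(i in S) `|h i|.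
have adm0 : admissible set0 by rewrite /admissible sub0set cards0.
case: (@arg_maxP _ R _ set0 admissible mass adm0) => S /andP [SD Sk] S_max.
exists S; split => // j /setDP [jD jS].
have [S_small | S_full] := ltnP #|S| k.
  have : admissible (j |: S) by rewrite /admissible subUset sub1set jD SD cardsU1 jS.
  move/S_max; rewrite /mass big_setU1 //= => hj.
  have : `|h j| <= 0 by lra.
  by rewrite normr_le0 => /eqP ->; rewrite normr0 mulr0 sumr_ge0.
have S_card : #|S| = k by apply/eqP; rewrite eqn_leq Sk S_full.
have -> : k%:R * `|h j| = \sum_(i in S) `|h j| by rewrite sumr_const S_card mulr_natl.
apply: ler_sum => i iS.
have : admissible (j |: (S :\ i)).
  rewrite /admissible subUset sub1set jD (subset_trans (subsetDl S [set i]) SD).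
  rewrite cardsU1 in_setD1 negb_and jS orbT add1n.
  by move: Sk; rewrite (cardsD1 i S) iS.
move/S_max; rewrite /mass big_setU1 /=; last by rewrite in_setD1 negb_and jS orbT.
rewrite (big_setD1 i iS) /=; lra.
Qed.

Lemma exists_topk_tail (I : finType) (k : nat) (D : {set I}) (h : I -> R) :
  exists S : {set I}, [/\ S \subset D, (#|S| <= k)%N &
    k%:R * \sum_(i in D :\: S) h i ^+ 2 <= (\sum_(i in D) `|h i|) ^+ 2].
Proof.
have [S [SD Sk S_top]] := exists_topk k D h.
exists S; split => //.
set top := \sum_(i in S) `|h i|; set rest := \sum_(i in D :\: S) `|h i|.
have top_ge0 : 0 <= top by apply: sumr_ge0.
have rest_ge0 : 0 <= rest by apply: sumr_ge0.
have -> : \sum_(i in D) `|h i| = top + rest by rewrite (big_setID S) (setIidPr SD).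
apply: (@le_trans _ _ (rest * top)); last by nra.
rewrite mulr_sumr /rest mulr_suml; apply: ler_sum => j /S_top hj.
by rewrite -real_normK ?num_real // expr2 mulrCA ler_wpM2l.
Qed.

Lemma sum_norm_sub_le_split (I : finType) (T : {set I}) (a b : I -> R) :
  \sum_i `|a i| - \sum_i `|b i| <=
  \sum_(i in T) `|b i - a i| - \sum_(i in ~: T) `|b i - a i| + 2 * \sum_(i in ~: T) `|a i|.
Proof.
rewrite !(sum_setC_split T).
have on_T : \sum_(i in T) `|a i| - \sum_(i in T) `|b i| <= \sum_(i in T) `|b i - a i|.
  by rewrite -sumrB; apply: ler_sum => i _; rewrite distrC lerB_dist.
have off_T : \sum_(i in ~: T) `|a i| - \sum_(i in ~: T) `|b i| <=
             2 * \sum_(i in ~: T) `|a i| - \sum_(i in ~: T) `|b i - a i|.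
  rewrite mulr_sumr -!sumrB; apply: ler_sum => i _.
  by have := ler_normB (b i) (a i); lra.
lra.
Qed.

Lemma sqr_le_affine (w c t : R) : 0 <= w -> 0 < c -> 0 <= t ->
  w ^+ 2 <= 2 * c * w + 2 * c * t -> w <= t + 2 * c.
Proof. by move=> w_ge0 c_gt0 t_ge0 hw; rewrite leNgt; apply/negP => lt; nra. Qed.

End Sums.

Section SqrtSums.
Variable R : rcfType.

Lemma sum_mul_le_sqrt (I : finType) (P : pred I) (a b : I -> R) :
  \sum_(i | P i) a i * b i <=
  Num.sqrt (\sum_(i | P i) a i ^+ 2) * Num.sqrt (\sum_(i | P i) b i ^+ 2).
Proof.
rewrite -sqrtrM; last by apply: sumr_ge0 => i _; apply: sqr_ge0.
by rewrite (le_trans _ (ler_wsqrtr (sum_mul_sqr_le P a b))) // sqrtr_sqr ler_norm.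
Qed.

Lemma sqrtrD_le (a b : R) : 0 <= a -> 0 <= b ->
  Num.sqrt (a + b) <= Num.sqrt a + Num.sqrt b.
Proof.
move=> a_ge0 b_ge0.
have sum_ge0 : 0 <= Num.sqrt a + Num.sqrt b by rewrite addr_ge0 ?sqrtr_ge0.
rewrite -(ger0_norm sum_ge0) -sqrtr_sqr ler_wsqrtr // sqrrD !sqr_sqrtr //.
by rewrite -addrA lerD2l lerDr mulrn_wge0 // mulr_ge0 ?sqrtr_ge0.
Qed.

Lemma sum_norm_le_sqrt_card (I : finType) (P : pred I) (k : nat) (v : I -> R) :
  (#|P| <= k)%N ->
  \sum_(i | P i) `|v i| <= Num.sqrt k%:R * Num.sqrt (\sum_(i | P i) v i ^+ 2).
Proof.
move=> Pk.
have := sum_mul_le_sqrt P (fun=> 1) (fun i => `|v i|).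
have -> : \sum_(i | P i) 1 * `|v i| = \sum_(i | P i) `|v i|.
  by apply: eq_bigr => i _; rewrite mul1r.
have -> : \sum_(i | P i) `|v i| ^+ 2 = \sum_(i | P i) v i ^+ 2.
  by apply: eq_bigr => i _; rewrite real_normK ?num_real.
have -> : \sum_(i | P i) (1 : R) ^+ 2 = #|P|%:R by rewrite expr1n sumr_const.
move/le_trans; apply; apply: ler_wpM2r; first exact: sqrtr_ge0.
by rewrite ler_wsqrtr // ler_nat.
Qed.

End SqrtSums.

Section Gram.
Variables (R : rcfType) (m n : nat) (A : 'M[R]_(m, n)) (mu : R).

Definition gram (i j : 'I_n) : R := \sum_(l < m) A l i * A l j.

Hypothesis gram_diag : forall i, gram i i = 1.
Hypothesis gram_off : forall i j, i != j -> `|gram i j| <= mu.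
Hypothesis mu_ge0 : 0 <= mu.

Lemma sum_mul_images_gram (S T : pred 'I_n) (h : 'I_n -> R) :
  \sum_(l < m) (\sum_(i | S i) A l i * h i) * (\sum_(j | T j) A l j * h j)
  = \sum_(i | S i) \sum_(j | T j) h i * h j * gram i j.
Proof.
transitivity (\sum_(l < m) \sum_(i | S i) \sum_(j | T j) h i * h j * (A l i * A l j)).
  apply: eq_bigr => l _; rewrite mulr_suml; apply: eq_bigr => i _.
  by rewrite mulr_sumr; apply: eq_bigr => j _; ring.
rewrite exchange_big; apply: eq_bigr => i _.
by rewrite exchange_big; apply: eq_bigr => j _; rewrite /gram mulr_sumr.
Qed.

Lemma gram_quad_dev_le (S : {set 'I_n}) (h : 'I_n -> R) :
  `| \sum_(i in S) \sum_(j in S) h i * h j * gram i j - \sum_(i in S) h i ^+ 2 |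
  <= mu * ((\sum_(i in S) `|h i|) ^+ 2 - \sum_(i in S) h i ^+ 2).
Proof.
rewrite sum_sum_diag.
have -> : \sum_(i in S) h i * h i * gram i i = \sum_(i in S) h i ^+ 2.
  by apply: eq_bigr => i _; rewrite gram_diag mulr1 expr2.
rewrite addrC addKr.
have -> : (\sum_(i in S) `|h i|) ^+ 2 = \sum_(i in S) \sum_(j in S) `|h i| * `|h j|.
  by rewrite expr2 mulr_suml; apply: eq_bigr => i _; rewrite mulr_sumr.
rewrite sum_sum_diag.
have -> : \sum_(i in S) `|h i| * `|h i| = \sum_(i in S) h i ^+ 2.
  by apply: eq_bigr => i _; rewrite -expr2 real_normK ?num_real.
rewrite addrC addKr mulr_sumr.
apply: le_trans (ler_norm_sum _ _ _) _; apply: ler_sum => i Si; rewrite mulr_sumr.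
apply: le_trans (ler_norm_sum _ _ _) _; apply: ler_sum => j /andP [_ ji].
rewrite normrM [`|h i * h j|]normrM mulrC ler_wpM2r ?mulr_ge0 //.
by apply: gram_off; rewrite eq_sym.
Qed.

Lemma gram_cross_le (S : {set 'I_n}) (h : 'I_n -> R) :
  `| \sum_(i in S) \sum_(j in ~: S) h i * h j * gram i j |
  <= mu * ((\sum_(i in S) `|h i|) * (\sum_(j in ~: S) `|h j|)).
Proof.
rewrite mulr_suml mulr_sumr.
apply: le_trans (ler_norm_sum _ _ _) _; apply: ler_sum => i Si.
rewrite mulr_sumr mulr_sumr.
apply: le_trans (ler_norm_sum _ _ _) _; apply: ler_sum => j Sj.
rewrite normrM [`|h i * h j|]normrM [X in _ <= X]mulrC ler_wpM2l ?mulr_ge0 //.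
by apply: gram_off; apply: contraTneq Sj => <-; rewrite in_setC Si.
Qed.

Lemma image_sqr_dev_le (k : nat) (S : {set 'I_n}) (h : 'I_n -> R) :
  (#|S| <= k)%N ->
  `| \sum_(l < m) (\sum_(i in S) A l i * h i) ^+ 2 - \sum_(i in S) h i ^+ 2 |
  <= (k%:R - 1) * mu * \sum_(i in S) h i ^+ 2.
Proof.
move=> Sk.
set N2 := \sum_(i in S) h i ^+ 2; set N1 := \sum_(i in S) `|h i|.
have N2_ge0 : 0 <= N2 by apply: sumr_ge0 => i _; apply: sqr_ge0.
have N1_sqr : N1 ^+ 2 <= k%:R * N2.
  rewrite -(sqr_sqrtr (ler0n R k)) -(sqr_sqrtr N2_ge0) -exprMn.
  by rewrite lerXn2r ?nnegrE ?mulr_ge0 ?sqrtr_ge0 ?sumr_ge0 // sum_norm_le_sqrt_card.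
under eq_bigr do rewrite expr2.
rewrite sum_mul_images_gram; apply: le_trans (gram_quad_dev_le S h) _.
rewrite -/N1 -/N2.
by have := ler_wpM2l mu_ge0 N1_sqr; lra.
Qed.

Lemma restricted_norm2_le (k : nat) (S : {set 'I_n}) (h : 'I_n -> R) :
  (0 < k)%N -> (#|S| <= k)%N ->
  (1 - (k%:R - 1) * mu) * Num.sqrt (\sum_(i in S) h i ^+ 2) <=
  Num.sqrt (1 + (k%:R - 1) * mu) * Num.sqrt (\sum_(l < m) (\sum_i A l i * h i) ^+ 2)
  + mu * Num.sqrt k%:R * \sum_(j in ~: S) `|h j|.
Proof.
move=> k_gt0 Sk.
set r := Num.sqrt (\sum_(i in S) h i ^+ 2).
set W := Num.sqrt (\sum_(l < m) _).
set tail := \sum_(j in ~: S) `|h j|.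
set q := \sum_(l < m) (\sum_(i in S) A l i * h i) ^+ 2.
set cross := \sum_(i in S) \sum_(j in ~: S) h i * h j * gram i j.
have r_ge0 : 0 <= r := sqrtr_ge0 _.
have W_ge0 : 0 <= W := sqrtr_ge0 _.
have tail_ge0 : 0 <= tail by apply: sumr_ge0.
have kmu_ge0 : 0 <= (k%:R - 1) * mu by rewrite mulr_ge0 // subr_ge0 ler1n.
have q_ge0 : 0 <= q by apply: sumr_ge0 => l _; apply: sqr_ge0.
have /andP [q_lo q_hi] : (1 - (k%:R - 1) * mu) * r ^+ 2 <= q <= (1 + (k%:R - 1) * mu) * r ^+ 2.
  have N2_ge0 : 0 <= \sum_(i in S) h i ^+ 2 by apply: sumr_ge0 => i _; apply: sqr_ge0.
  have := image_sqr_dev_le h Sk; rewrite -(sqr_sqrtr N2_ge0) -/r -/q.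
  by rewrite ler_norml => /andP [lo hi]; apply/andP; split; lra.
have q_cross : q + cross <= Num.sqrt q * W.
  have -> : q + cross = \sum_(l < m) (\sum_(i in S) A l i * h i) * (\sum_i A l i * h i).
    rewrite /q /cross -sum_mul_images_gram; under eq_bigr do rewrite expr2.
    rewrite -big_split /=; apply: eq_bigr => l _.
    by rewrite (sum_setC_split S) mulrDr.
  exact: sum_mul_le_sqrt.
have sqrt_q : Num.sqrt q <= Num.sqrt (1 + (k%:R - 1) * mu) * r.
  rewrite -[r]ger0_norm // -sqrtr_sqr -sqrtrM ?ler_wsqrtr //; lra.
have cross_lo : - cross <= mu * (Num.sqrt k%:R * r * tail).
  apply: le_trans (ler_normlW _) _; first by rewrite normrN; exact: gram_cross_le.
  by rewrite ler_wpM2l // ler_wpM2r // sum_norm_le_sqrt_card.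
have : (1 - (k%:R - 1) * mu) * r ^+ 2 <=
       r * (Num.sqrt (1 + (k%:R - 1) * mu) * W + mu * Num.sqrt k%:R * tail).
  have := ler_wpM2r W_ge0 sqrt_q; nra.
have [-> | r_gt0] := eqVneq r 0; first by rewrite mulr0 addr_ge0 ?mulr_ge0 ?sqrtr_ge0.
by rewrite expr2 mulrA mulrC ler_pM2l // lt_def r_gt0.
Qed.

End Gram.

Section CoherenceConstants.
Variables (R : realType) (k : nat) (mu : R).
Hypotheses (k_gt0 : (0 < k)%N) (mu_ge0 : 0 <= mu) (mu_lt : (2 * k%:R - 1) * mu < 1).

Local Notation sk := (Num.sqrt (k%:R : R)).

Lemma sqrtk_gt0 : 0 < sk.
Proof. by rewrite sqrtr_gt0 ltr0n. Qed.

Lemma coherence_denom_gt0 : 0 < 1 - (k%:R - 1) * mu.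
Proof.
have kmu_ge0 : 0 <= k%:R * mu :> R by rewrite mulr_ge0.
(* [lra] gives up on products involving the cast [k%:R]; abstract it first. *)
move: kmu_ge0 mu_lt; set K := k%:R; lra.
Qed.

Lemma alpha1_gt0 : 0 < alpha1 k mu.
Proof.
rewrite divr_gt0 ?coherence_denom_gt0 // sqrtr_gt0.
have kmu_ge0 : 0 <= (k%:R - 1) * mu :> R by rewrite mulr_ge0 // subr_ge0 ler1n.
lra.
Qed.

Lemma alpha2_ge0 : 0 <= alpha2 k mu.
Proof. by rewrite divr_ge0 ?mulr_ge0 ?sqrtr_ge0 // ltW ?coherence_denom_gt0. Qed.

Lemma sqrtk_alpha2_lt1 : sk * alpha2 k mu < 1.
Proof.
rewrite /alpha2 !mulrA -expr2 sqr_sqrtr ?ler0n // ltr_pdivrMr ?coherence_denom_gt0 //.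
move: mu_lt; set K := k%:R; lra.
Qed.

End CoherenceConstants.

Section CoherenceRecovery.
Variables (R : realType) (m n k : nat) (A : 'M[R]_(m, n)) (mu : R).
Hypothesis gram_diag : forall i, gram A i i = 1.
Hypothesis gram_off : forall i j, i != j -> `|gram A i j| <= mu.
Hypotheses (k_gt0 : (0 < k)%N) (mu_ge0 : 0 <= mu) (mu_lt : (2 * k%:R - 1) * mu < 1).
Variable h : 'I_n -> R.

Local Notation sk := (Num.sqrt (k%:R : R)).
Local Notation a1 := (alpha1 k mu).
Local Notation a2 := (alpha2 k mu).
Local Notation W := (Num.sqrt (\sum_(l < m) (\sum_i A l i * h i) ^+ 2)).

Lemma norm2_restr_le (S : {set 'I_n}) : (#|S| <= k)%N ->
  Num.sqrt (\sum_(i in S) h i ^+ 2) <= a1 * W + a2 * \sum_(j in ~: S) `|h j|.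
Proof.
move=> Sk; have d_gt0 := coherence_denom_gt0 mu_ge0 mu_lt.
have -> : a1 * W + a2 * \sum_(j in ~: S) `|h j| =
  (Num.sqrt (1 + (k%:R - 1) * mu) * W + mu * sk * \sum_(j in ~: S) `|h j|) /
  (1 - (k%:R - 1) * mu) by rewrite /alpha1 /alpha2; ring.
by rewrite ler_pdivlMr // mulrC restricted_norm2_le.
Qed.

Lemma norm1_restr_le (S : {set 'I_n}) : (#|S| <= k)%N ->
  \sum_(i in S) `|h i| <= sk * a1 * W + sk * a2 * \sum_(j in ~: S) `|h j|.
Proof.
move=> Sk; have -> : sk * a1 * W + sk * a2 * \sum_(j in ~: S) `|h j| =
  sk * (a1 * W + a2 * \sum_(j in ~: S) `|h j|) by rewrite mulrDr !mulrA.
apply: le_trans (sum_norm_le_sqrt_card h Sk) _.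
by rewrite ler_wpM2l ?sqrtr_ge0 ?norm2_restr_le.
Qed.

Lemma norm2_le_image_tail (T : {set 'I_n}) : (#|T| <= k)%N ->
  Num.sqrt (\sum_i h i ^+ 2) <=
  (2 + sk * a2) * a1 * W + (1 + sk * a2) ^+ 2 * (\sum_(j in ~: T) `|h j|) / sk.
Proof.
move=> Tk.
have [S [ST Sk S_tail]] := exists_topk_tail k (~: T) h.
set P := \sum_(j in ~: T) `|h j|.
have sq_ge0 (U : {set 'I_n}) : 0 <= \sum_(i in U) h i ^+ 2.
  by apply: sumr_ge0 => i _; apply: sqr_ge0.
have sk_gt0 := sqrtk_gt0 R k_gt0.
have a2_ge0 := alpha2_ge0 mu_ge0 mu_lt.
have split3 : \sum_i h i ^+ 2 = \sum_(i in T) h i ^+ 2 + \sum_(i in S) h i ^+ 2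
                                + \sum_(i in ~: T :\: S) h i ^+ 2.
  by rewrite (sum_setC_split T) [\sum_(i in ~: T) _](big_setID S) (setIidPr ST) addrA.
have rest_le : Num.sqrt (\sum_(i in ~: T :\: S) h i ^+ 2) <= P / sk.
  rewrite -[P / sk]ger0_norm ?divr_ge0 ?sumr_ge0 ?sqrtr_ge0 // -sqrtr_sqr ler_wsqrtr //.
  by rewrite expr_div_n sqr_sqrtr ?ler0n // ler_pdivlMr ?ltr0n // mulrC.
have S_compl : \sum_(j in ~: S) `|h j| <= \sum_(i in T) `|h i| + P.
  rewrite -sum_setC_split (sum_setC_split S) lerDr; exact: sumr_ge0.
have T_l1 := norm1_restr_le Tk; rewrite -/P in T_l1.
have T_l2 := norm2_restr_le Tk; rewrite -/P in T_l2.
have S_l2 : Num.sqrt (\sum_(i in S) h i ^+ 2) <= a1 * W + a2 * (\sum_(i in T) `|h i| + P).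
  by apply: le_trans (norm2_restr_le Sk) _; rewrite lerD2l ler_wpM2l.
rewrite split3.
apply: le_trans (sqrtrD_le (addr_ge0 (sq_ge0 _) (sq_ge0 _)) (sq_ge0 _)) _.
apply: le_trans (lerD (sqrtrD_le (sq_ge0 _) (sq_ge0 _)) rest_le) _.
have -> : (1 + sk * a2) ^+ 2 * P / sk = P / sk + 2 * a2 * P + a2 * (sk * a2 * P).
  by field; rewrite gt_eqF.
have := ler_wpM2l a2_ge0 T_l1; lra.
Qed.

End CoherenceRecovery.

Section Coherence.
Variables (R : realType) (m n : nat) (A : 'M[R]_(m, n)).

Lemma dotv_col_gram i j : dotv (col i A) (col j A) = gram A i j.
Proof. by apply: eq_bigr => l _; rewrite !mxE. Qed.

Lemma coherence_ge0 : 0 <= coherence A.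
Proof. exact: bigmax_ge_id. Qed.

Lemma gram_le_coherence i j : i != j -> `|gram A i j| <= coherence A.
Proof.
wlog lt_ij : i j / (i < j)%N.
  move=> gen neq_ij; have [lt_ij | ] := ltnP i j; first exact: gen.
  rewrite leq_eqVlt => /orP [/eqP/val_inj eq_ji | lt_ji]; first by rewrite eq_ji eqxx in neq_ij.
  have -> : gram A i j = gram A j i by apply: eq_bigr => l _; rewrite mulrC.
  by apply: gen; rewrite // eq_sym.
move=> _; rewrite -dotv_col_gram.
exact: le_trans (le_bigmax_cond _ _ lt_ij) (le_bigmax _ _ i).
Qed.

Lemma gram_diag_unit_cols : (forall i, norm2 (col i A) = 1) -> forall i, gram A i i = 1.
Proof.
move=> unit_cols i; rewrite -dotv_col_gram.
have : norm2 (col i A) ^+ 2 = 1 by rewrite unit_cols expr1n.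
rewrite sqr_sqrtr; last by apply: sumr_ge0 => l _; apply: sqr_ge0.
by move=> <-; apply: eq_bigr => l _; rewrite expr2.
Qed.

End Coherence.

Section Norm2.
Variables (R : realType) (p : nat).
Implicit Types u v : 'cV[R]_p.

Lemma norm2_ge0 u : 0 <= norm2 u.
Proof. exact: sqrtr_ge0. Qed.

Lemma sqr_norm2 u : norm2 u ^+ 2 = \sum_(l < p) u l 0 ^+ 2.
Proof. by rewrite sqr_sqrtr //; apply: sumr_ge0 => l _; apply: sqr_ge0. Qed.

Lemma dotv_le_norm2 u v : dotv u v <= norm2 u * norm2 v.
Proof. exact: sum_mul_le_sqrt. Qed.

Lemma sqr_norm2B u v : norm2 (u - v) ^+ 2 = norm2 u ^+ 2 - 2 * dotv u v + norm2 v ^+ 2.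
Proof.
rewrite !sqr_norm2 /dotv mulr_sumr -sumrB -big_split /=.
by apply: eq_bigr => l _; rewrite !mxE; ring.
Qed.

End Norm2.

Lemma norm2_mulmx (R : realType) (m n : nat) (A : 'M[R]_(m, n)) (v : 'cV[R]_n) :
  norm2 (A *m v) = Num.sqrt (\sum_(l < m) (\sum_i A l i * v i 0) ^+ 2).
Proof. by congr Num.sqrt; apply: eq_bigr => l _; rewrite mxE. Qed.

Lemma lasso_basic_ineq (R : realType) (m n : nat) (A : 'M[R]_(m, n)) (x xs : 'cV[R]_n)
    (z : 'cV[R]_m) (lam : R) : 0 < lam ->
  lasso_obj A (A *m x + z) lam xs <= lasso_obj A (A *m x + z) lam x ->
  norm2 (A *m (xs - x)) ^+ 2 <=
  2 * norm2 z * norm2 (A *m (xs - x)) + 2 * lam * (norm1 x - norm1 xs).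
Proof.
move=> lam_gt0; rewrite /lasso_obj.
have -> : A *m x + z - A *m x = z by rewrite addrAC subrr add0r.
have -> : A *m x + z - A *m xs = z - A *m (xs - x) by rewrite mulmxBr opprB addrAC addrC.
rewrite sqr_norm2B; set w := A *m (xs - x) => obj.
have dot_le := dotv_le_norm2 z w.
have : norm2 w ^+ 2 - 2 * dotv z w <= 2 * lam * (norm1 x - norm1 xs).
  by rewrite -ler_pdivrMl ?mulr_gt0 //; lra.
lra.
Qed.

Lemma norm1_sub_ge_off_support (R : realType) (n : nat) (x xk : 'cV[R]_n) :
  \sum_(i in ~: [set i | xk i 0 != 0]) `|x i 0| <= norm1 (x - xk).
Proof.
set T := [set i | xk i 0 != 0]; rewrite /norm1 (sum_setC_split T).
have -> : \sum_(i in ~: T) `|x i 0| = \sum_(i in ~: T) `|(x - xk) i 0|.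
  by apply: eq_bigr => i; rewrite !inE negbK => /eqP xk0; rewrite !mxE xk0 subr0.
by rewrite lerDr sumr_ge0.
Qed.

Section LassoError.
Variables (R : realType) (m n k : nat) (A : 'M[R]_(m, n)).
Variables (x xs : 'cV[R]_n) (z : 'cV[R]_m) (eps lam sigma : R) (T : {set 'I_n}).

Local Notation mu := (coherence A).
Local Notation sk := (Num.sqrt (k%:R : R)).
Local Notation a1 := (alpha1 k mu).
Local Notation a2 := (alpha2 k mu).
Local Notation c := (sk * a1 * lam + eps).
Local Notation W := (norm2 (A *m (xs - x))).
Local Notation P := (\sum_(i in ~: T) `|xs i 0 - x i 0|).

Hypothesis unit_cols : forall i, norm2 (col i A) = 1.
Hypothesis k_gt0 : (0 < k)%N.
Hypothesis mu_lt : (2 * k%:R - 1) * mu < 1.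
Hypothesis z_le : norm2 z <= eps.
Hypothesis lam_gt0 : 0 < lam.
Hypothesis xs_le_x : lasso_obj A (A *m x + z) lam xs <= lasso_obj A (A *m x + z) lam x.
Hypothesis T_card : (#|T| <= k)%N.
Hypothesis x_tail : \sum_(i in ~: T) `|x i 0| <= sigma.

Let mu_ge0 := coherence_ge0 A.
Let gram_diag := gram_diag_unit_cols unit_cols.
Let gram_off := @gram_le_coherence R m n A.

Lemma norm2_image_errE : W = Num.sqrt (\sum_(l < m) (\sum_i A l i * (xs i 0 - x i 0)) ^+ 2).
Proof.
rewrite norm2_mulmx; congr Num.sqrt; apply: eq_bigr => l _.
by under eq_bigr do rewrite !mxE.
Qed.

Lemma c_gt0 : 0 < c.
Proof.
have eps_ge0 : 0 <= eps := le_trans (norm2_ge0 z) z_le.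
have := mulr_gt0 (mulr_gt0 (sqrtk_gt0 R k_gt0) (alpha1_gt0 k_gt0 mu_ge0 mu_lt)) lam_gt0.
lra.
Qed.

Lemma lasso_err_quadratic :
  W ^+ 2 <= 2 * c * W + 4 * lam * sigma - 2 * lam * (1 - sk * a2) * P.
Proof.
have basic := lasso_basic_ineq lam_gt0 xs_le_x.
have cone := sum_norm_sub_le_split T (fun i => x i 0) (fun i => xs i 0).
have T_l1 := norm1_restr_le gram_diag gram_off k_gt0 mu_ge0 mu_lt (fun i => xs i 0 - x i 0) T_card.
rewrite -norm2_image_errE in T_l1.
have zW : norm2 z * W <= eps * W by rewrite ler_wpM2r ?norm2_ge0.
have := ler_wpM2l (ltW lam_gt0) T_l1; have := ler_wpM2l (ltW lam_gt0) x_tail.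
have := ler_wpM2l (ltW lam_gt0) cone.
rewrite /norm1 in basic *; lra.
Qed.

Lemma sigma_ge0 : 0 <= sigma.
Proof. by apply: le_trans x_tail; apply: sumr_ge0. Qed.

Lemma lasso_image_err_le : W <= 2 * lam * sigma / c + 2 * c.
Proof.
have c_pos := c_gt0.
have t_ge0 : 0 <= 2 * lam * sigma / c.
  by rewrite divr_ge0 ?mulr_ge0 ?sigma_ge0 ?(ltW lam_gt0) ?(ltW c_pos).
apply: sqr_le_affine (norm2_ge0 _) c_pos t_ge0 _.
have -> : 2 * c * (2 * lam * sigma / c) = 4 * lam * sigma.
  by field; exact: lt0r_neq0 c_gt0.
have u_le1 : 0 <= 1 - sk * a2 by rewrite subr_ge0 ltW ?sqrtk_alpha2_lt1.
have P_ge0 : 0 <= P by apply: sumr_ge0.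
have : 0 <= 2 * lam * (1 - sk * a2) * P by rewrite !mulr_ge0 // ltW.
have := lasso_err_quadratic; lra.
Qed.

Lemma lasso_tail_err_le : P <= (4 * lam * sigma + c ^+ 2) / (2 * lam * (1 - sk * a2)).
Proof.
have u_lt1 := sqrtk_alpha2_lt1 mu_ge0 mu_lt.
rewrite ler_pdivlMr ?mulr_gt0 ?subr_gt0 //.
have := lasso_err_quadratic; have := sqr_ge0 (W - c); lra.
Qed.

Lemma lasso_err_le : norm2 (xs - x) <=
  (2 + sk * a2) * a1 * (2 * lam * sigma / c + 2 * c)
  + (1 + sk * a2) ^+ 2 * ((4 * lam * sigma + c ^+ 2) / (2 * lam * (1 - sk * a2))) / sk.
Proof.
have := norm2_le_image_tail gram_diag gram_off k_gt0 mu_ge0 mu_lt (fun i => xs i 0 - x i 0) T_card.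
rewrite -norm2_image_errE.
have -> : Num.sqrt (\sum_i (xs i 0 - x i 0) ^+ 2) = norm2 (xs - x).
  by congr Num.sqrt; apply: eq_bigr => i _; rewrite !mxE.
have u_ge0 : 0 <= sk * a2 by rewrite mulr_ge0 ?sqrtr_ge0 ?alpha2_ge0.
have a1_gt0 := alpha1_gt0 k_gt0 mu_ge0 mu_lt.
move/le_trans; apply; apply: lerD.
  apply: ler_wpM2l; last exact: lasso_image_err_le.
  by rewrite mulr_ge0 ?addr_ge0 // ltW.
apply: ler_wpM2r; first by rewrite invr_ge0 sqrtr_ge0.
by apply: ler_wpM2l; [exact: sqr_ge0 | exact: lasso_tail_err_le].
Qed.

End LassoError.

Lemma err_bound_le_closed_form (R : realFieldType) (s a1 a2 lam eps sigma : R) :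
  let c := s * a1 * lam + eps in
  0 < s -> 0 < a1 -> 0 <= a2 -> s * a2 < 1 -> 0 < lam -> 0 <= eps -> 0 <= sigma ->
  (2 + s * a2) * a1 * (2 * lam * sigma / c + 2 * c)
  + (1 + s * a2) ^+ 2 * ((4 * lam * sigma + c ^+ 2) / (2 * lam * (1 - s * a2))) / s <=
  (2 * s * a1 * (s ^+ 2 * a2 ^+ 2 + 3 * s * a2 + 3) * lam
   + 2 * (2 * s ^+ 2 * a2 ^+ 2 + 4 * s * a2 + 1) * eps) / (s * (1 - s * a2) * c) * sigma
  + (s * a1 * (5 + 2 * s * a2) * lam + (2 * s ^+ 2 * a2 ^+ 2 + 4 * s * a2 + 1) * eps) * c
    / (s * (1 - s * a2) * lam).
Proof.
move=> c s_gt0 a1_gt0 a2_ge0 u_lt1 lam_gt0 eps_ge0 sigma_ge0.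
have c_gt0 : 0 < c by rewrite ltr_wpDr // !mulr_gt0.
have u_ge0 : 0 <= s * a2 by rewrite mulr_ge0 // ltW.
have v_gt0 : 0 < 1 - s * a2 by rewrite subr_gt0.
rewrite -subr_ge0.
set L := (X in _ - X); set Rr := (X in X - _).
have -> : Rr - L = (4 * lam * sigma * ((s * a2) ^+ 2 + 2 * (s * a2))
                    + c ^+ 2 * (3 * (s * a2) ^+ 2 + 6 * (s * a2) + 1))
                   / (2 * s * lam * (1 - s * a2)).
  rewrite /L /Rr /c; field.
  by rewrite (gt_eqF c_gt0) (gt_eqF lam_gt0) (gt_eqF s_gt0) (gt_eqF v_gt0).
apply: divr_ge0; last by rewrite !mulr_ge0 ?ltW.
have lam_sigma_ge0 : 0 <= 4 * lam * sigma by rewrite !mulr_ge0 // ltW.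
move: u_ge0; set u := s * a2 => u_ge0.
by rewrite addr_ge0 // mulr_ge0 // ?sqr_ge0; nra.
Qed.

Theorem theorem1 (R : realType) (m n k : nat) (A : 'M[R]_(m, n))
    (x : 'cV[R]_n) (eps : R) (z : 'cV[R]_m) (lam : R)
    (xs xk : 'cV[R]_n) :
  (2 <= k)%N ->
  (forall i : 'I_n, norm2 (col i A) = 1) ->
  coherence A < (2 * k%:R - 1)^-1 ->
  0 <= eps ->
  norm2 z <= eps ->
  0 < lam ->
  (forall y : 'cV[R]_n,
     lasso_obj A (A *m x + z) lam xs <= lasso_obj A (A *m x + z) lam y) ->
  best_kterm k x xk ->
  let mu := coherence A in
  let a1 := alpha1 k mu in
  let a2 := alpha2 k mu in
  let sk := Num.sqrt (k%:R : R) in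
  norm2 (A *m (xs - x)) <=
    2 * lam / (sk * a1 * lam + eps) * norm1 (x - xk) + 2 * (sk * a1 * lam + eps)
  /\
  norm2 (xs - x) <=
    (2 * sk * a1 * fk k a2 * lam + 2 * gk k a2 * eps)
      / (sk * (1 - sk * a2) * (sk * a1 * lam + eps)) * norm1 (x - xk)
    + (sk * a1 * (5 + 2 * sk * a2) * lam + gk k a2 * eps) * (sk * a1 * lam + eps)
      / (sk * (1 - sk * a2) * lam).
Proof.
move=> k_ge2 unit_cols coh_lt eps_ge0 z_le lam_gt0 xs_opt [xk_sparse _] mu a1 a2 sk.
have k_gt0 : (0 < k)%N by apply: leq_trans k_ge2.
have mu_lt : (2 * k%:R - 1) * mu < 1.
  have k_ge2R : (2 : R) <= k%:R by rewrite ler_nat.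
  by rewrite mulrC -ltr_pdivlMr ?div1r //; lra.
have x_tail := norm1_sub_ge_off_support x xk.
have mu_ge0 := coherence_ge0 A.
split.
  rewrite mulrAC.
  exact: lasso_image_err_le unit_cols k_gt0 mu_lt z_le lam_gt0 (xs_opt x) xk_sparse x_tail.
apply: le_trans
  (lasso_err_le unit_cols k_gt0 mu_lt z_le lam_gt0 (xs_opt x) xk_sparse x_tail) _.
have -> : fk k a2 = sk ^+ 2 * a2 ^+ 2 + 3 * sk * a2 + 3 by rewrite /fk /sk sqr_sqrtr.
have -> : gk k a2 = 2 * sk ^+ 2 * a2 ^+ 2 + 4 * sk * a2 + 1 by rewrite /gk /sk sqr_sqrtr.
exact: err_bound_le_closed_form (sqrtk_gt0 R k_gt0) (alpha1_gt0 k_gt0 mu_ge0 mu_lt)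
  (alpha2_ge0 mu_ge0 mu_lt) (sqrtk_alpha2_lt1 mu_ge0 mu_lt) lam_gt0 eps_ge0
  (sigma_ge0 x_tail).
Qed.
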